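(* Consider a $2\times N$ switch with traffic pattern consisting of one broadcast flow from input 1 to all $N$ outputs with rate $r_0$ and, for each $i\in[N]$, a unicast flow from input 2 to output $i$ with rate $r_i$. With fanout splitting but no coding, the achievable rate region is exactly the set of (rational) vectors $(r_0,r_1,\dots,r_N)$ satisfying $r_i\ge0$ for $i=0,\dots,N$; $\sum_{i=1}^N r_i\le1$; $r_0+r_i\le1$ for $i=1,\dots,N$; and $2r_0+\sum_{i=1}^N r_i\le 2$.
   Context: Slotted time. A configuration: each input idles or picks one of its flows and connects to a subset of that flow's fanout outputs, sending one packet to all connected outputs; each output connects to at most one input. Without coding, every transmitted packet is one original packet of the flow (fanout splitting means a broadcast packet may be delivered to different outputs in different slots); a packet is served once it has been delivered to all outputs in its fanout and is then removed from its queue. A frame is $F$ consecutive slots; a frame-based schedule is a fixed sequence of $F$ configurations repeated each frame. Here the achievable rate region is the set of rational rate vectors for which there is a frame-based schedule (without coding) with frame size $F$ such that each $r_iF$ is an integer and, for every flow and every frame $n\ge1$, the oldest $r F$ packets (with $r$ the flow's rate) in the flow's queue at the end of frame $n-1$ are served by the end of frame $n$ (all of them if there are fewer). *)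

From HB Require Import structures.
From mathcomp Require Import all_boot all_order all_algebra.
Set Implicit Arguments. Unset Strict Implicit. Unset Printing Implicit Defensive.
Import Order.TTheory GRing.Theory Num.Theory.

Section Switch.
Variables (m n : nat) (Fl : finType) (src : Fl -> 'I_m) (fan : Fl -> {set 'I_n}).

(* A configuration: each input idles (None) or picks one of its flows  *)
(* and a subset of that flow's fanout outputs.                         *)
Definition config := {ffun 'I_m -> option (Fl * {set 'I_n})}.

Definition idle_config : config := [ffun => None].

Definition valid_config (c : config) : Prop :=
  (forall i, match c i with
             | Some (f, X) => src f = i /\ X \subset fan f
             | None => True
             end) /\
  (forall i1 i2 f1 X1 f2 X2, i1 != i2 ->
     c i1 = Some (f1, X1) -> c i2 = Some (f2, X2) -> [disjoint X1 & X2]).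

Definition slot_config (sch : seq config) (t : nat) : config :=
  nth idle_config sch (t %% size sch).

(* Arrivals: [A f t] = number of packets of flow f that have arrived    *)
(* before slot t begins (A f 0 = initial backlog).  Packets of flow f   *)
(* are numbered 0,1,2,... in arrival order.                             *)
Definition arrivals := Fl -> nat -> nat.

Definition arrivals_monotone (A : arrivals) : Prop :=
  forall f t, A f t <= A f t.+1.

(* Packet selection: which original packet input i transmits in slot t *)
(* (None = nothing transmitted), as a function of the arrival process. *)
Definition policy := arrivals -> nat -> 'I_m -> option nat.

Definition causal (pol : policy) : Prop :=
  forall (A B : arrivals) t,
    (forall f s, s <= t -> A f s = B f s) -> forall i, pol A t i = pol B t i.

Section Run.
Variables (sch : seq config) (pol : policy) (A : arrivals).

Definition delivered (f : Fl) (k : nat) (j : 'I_n) (t : nat) : Prop :=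
  exists s X, s < t /\ slot_config sch s (src f) = Some (f, X) /\
              j \in X /\ pol A s (src f) = Some k.

Definition served (f : Fl) (k : nat) (t : nat) : Prop :=
  forall j, j \in fan f -> delivered f k j t.

Definition in_queue (f : Fl) (k : nat) (t : nat) : Prop :=
  k < A f t /\ ~ served f k t.

Definition valid_run : Prop :=
  forall t i f X k, slot_config sch t i = Some (f, X) ->
    pol A t i = Some k -> in_queue f k t.

Definition among_oldest (f : Fl) (c : nat) (k : nat) (T : nat) : Prop :=
  in_queue f k T /\
  forall s : seq nat, uniq s ->
    (forall k', k' \in s -> k' < k /\ in_queue f k' T) -> size s < c.

Definition frame_guarantee (c : Fl -> nat) : Prop :=
  forall nf, 0 < nf -> forall f k,
    among_oldest f (c f) k ((nf.-1) * size sch) -> served f k (nf * size sch).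

End Run.

Definition achievable (r : Fl -> rat) : Prop :=
  exists (sch : seq config) (c : Fl -> nat),
    [/\ 0 < size sch,
        (forall t, valid_config (slot_config sch t)),
        (forall f, (r f * (size sch)%:R = (c f)%:R)%R) &
        exists pol : policy, causal pol /\
          forall A : arrivals, arrivals_monotone A ->
            valid_run sch pol A /\ frame_guarantee sch pol A c].

End Switch.

(* The 2 x N switch: flow None = broadcast flow from input 1 (index 0)  *)
(* to all outputs; flow Some i = unicast from input 2 (index 1) to i.  *)
Definition src2N (N : nat) (f : option 'I_N) : 'I_2 :=
  if f is Some _ then ord_max else ord0.

Definition fan2N (N : nat) (f : option 'I_N) : {set 'I_N} :=
  if f is Some i then [set i] else setT.

Definition rates2N (N : nat) (r0 : rat) (r : 'I_N -> rat) (f : option 'I_N) : rat :=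
  if f is Some i then r i else r0.

From mathcomp Require Import all_boot all_order all_algebra.
From mathcomp Require Import zify ring.
Import Order.TTheory GRing.Theory Num.Theory.
Set Implicit Arguments. Unset Strict Implicit. Unset Printing Implicit Defensive.

(* Write c f = r f * F for a common denominator F.  Necessity: under the constant
   arrival process A f t = c f, every packet of the first batch is served during the
   first frame; input 2 sends one packet per slot, each output receives one packet per
   slot, and a broadcast packet either reaches all outputs in one slot, in which input 2
   can send nothing, or occupies two slots of input 1.  Sufficiency: input 2 serves the
   unicast flows in consecutive blocks filling the slots [0, U).  Broadcast packets go
   to all outputs in free slots after U while there are any; each of the remaining b is
   split, the p-th one going in slot p to all outputs but the one input 2 serves, and in
   slot p + (U - b) to that output alone.  The load conditions bound every unicast block
   by U - b, so by then input 2 serves another output. *)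

Lemma nondecreasing_interval (g : nat -> nat) : (forall k, g k <= g k.+1) ->
  forall n t, g 0 <= t -> t < g n -> exists2 i, i < n & g i <= t < g i.+1.
Proof.
move=> g_step; elim=> [|n IHn] t g0t tgn; first by have := leq_ltn_trans g0t tgn; rewrite ltnn.
case: (ltnP t (g n)) => [tgn'|gnt]; last by exists n; rewrite ?gnt.
by have [i ltin gi] := IHn t g0t tgn'; exists i => //; apply: ltnW.
Qed.

Lemma leq_sum_term (I : finType) (g : I -> nat) i : g i <= \sum_i g i.
Proof. by rewrite (bigD1 i) //= leq_addr. Qed.

Lemma count_passed_steps (g : nat -> nat) n i t : (forall k, g k <= g k.+1) ->
  i < n -> g i <= t < g i.+1 -> \sum_(j < n) (g j.+1 <= t : nat) = i.
Proof.
move=> g_step ltin /andP[git tgi]; have g_mono := homo_leq leqnn leq_trans g_step.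
transitivity (\sum_(j < n) (j < i : nat)).
  apply: eq_bigr => j _; case: (ltnP j i) => [ltji|leij].
    by rewrite (leq_trans (g_mono _ _ ltji) git).
  by rewrite leqNgt (leq_trans tgi (g_mono _ _ _)).
suff ->: \sum_(j < n) (j < i : nat) = minn i n by lia.
by elim: n {ltin} => [|n IHn]; rewrite ?big_ord0 ?big_ord_recr /= ?IHn; lia.
Qed.

Section FrameSchedule.
Variables (m n : nat) (Fl : finType) (src : Fl -> 'I_m) (fan : Fl -> {set 'I_n}).
Variables (sch : seq (config m n Fl)) (c : Fl -> nat) (role : Fl -> nat -> nat).
Local Notation F := (size sch).
Local Notation frame_config tt := (nth (idle_config m n Fl) sch tt).

Hypothesis sch_nonempty : 0 < F.
Hypothesis sch_valid : forall t, valid_config src fan (slot_config sch t).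
Hypothesis fan_nonempty : forall f, exists j, j \in fan f.
(* Slot [tt] of every frame carries the packet of rank [role f tt] in the frame's batch
   of flow [f]; [role_fresh] makes sure that packet is still queued when sent. *)
Hypothesis role_lt : forall f tt X, tt < F -> frame_config tt (src f) = Some (f, X) ->
  role f tt < c f.
Hypothesis role_covers : forall f p j, p < c f -> j \in fan f -> exists tt X,
  [/\ tt < F, frame_config tt (src f) = Some (f, X), j \in X & role f tt = p].
Hypothesis role_fresh : forall f tt X, tt < F -> frame_config tt (src f) = Some (f, X) ->
  exists2 j, j \in fan f & forall tt' X', tt' < tt ->
    frame_config tt' (src f) = Some (f, X') -> role f tt' = role f tt -> j \notin X'.

(* Frame [k] sends the packets [batch_start k <= i < batch_start k.+1] of flow [f]:
   the (at most [c f]) oldest ones not served by the end of frame [k.-1]. *)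
Fixpoint batch_start (A : arrivals Fl) (f : Fl) (k : nat) : nat :=
  if k is k'.+1 then minn (batch_start A f k' + c f) (A f (k' * F)) else 0.

Definition frame_policy : policy m Fl := fun A t i =>
  match slot_config sch t i with
  | Some (f, _) => let k := batch_start A f (t %/ F) + role f (t %% F) in
                   if k < A f (t %/ F * F) then Some k else None
  | None => None
  end.

Lemma frame_policy_causal : causal frame_policy.
Proof.
move=> A B t eqAB i; rewrite /frame_policy.
case: (slot_config sch t i) => [[f X]|] //.
have eq_start k : k <= t %/ F -> batch_start A f k = batch_start B f k.
  elim: k => [|k IHk] lekt //=; rewrite IHk ?(ltnW lekt) // eqAB //.
  by rewrite (leq_trans _ (leq_divM t F)) // leq_mul2r ltnW ?orbT.
by rewrite eq_start // eqAB // leq_divM.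
Qed.

Section Run.
Variable A : arrivals Fl.
Hypothesis A_step : arrivals_monotone A.

Let A_mono f : {homo A f : s t / s <= t}.
Proof. exact: homo_leq leqnn leq_trans (A_step f). Qed.

Lemma batch_start_step f k : batch_start A f k <= batch_start A f k.+1.
Proof.
case: k => [|k] //=; rewrite leq_min leq_addr /=.
by rewrite (leq_trans (geq_minr _ _)) // A_mono // leq_mul2r leqnSn orbT.
Qed.

Let batch_start_mono f : {homo batch_start A f : k l / k <= l}.
Proof. exact: homo_leq leqnn leq_trans (@batch_start_step f). Qed.

Lemma sent_in_batch f s X k : slot_config sch s (src f) = Some (f, X) ->
  frame_policy A s (src f) = Some k ->
  [/\ k = batch_start A f (s %/ F) + role f (s %% F), batch_start A f (s %/ F) <= k
    & k < batch_start A f (s %/ F).+1].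
Proof.
move=> sX; rewrite /frame_policy sX; case: ifP => // ltkA [<-].
split; rewrite ?leq_addr //= leq_min ltkA andbT ltn_add2l.
exact: role_lt (ltn_pmod _ sch_nonempty) sX.
Qed.

Lemma delivered_below_batch f k j nn :
  delivered src sch frame_policy A f k j (nn * F) -> k < batch_start A f nn.
Proof.
case=> s [X [ltsF [sX [jX sk]]]]; have [_ _ ltk] := sent_in_batch sX sk.
by rewrite (leq_trans ltk) // batch_start_mono // ltn_divLR.
Qed.

Lemma served_below_batch f k nn :
  k < batch_start A f nn -> served src fan sch frame_policy A f k (nn * F).
Proof.
move=> ltk j jf.
have [i ltin /andP[lei ltk']] := nondecreasing_interval (@batch_start_step f) (leq0n k) ltk.
have lt_pos : k - batch_start A f i < c f.
  by move: ltk' => /= /leq_trans/(_ (geq_minl _ _)); lia.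
have [tt [X [lttF ttX jX ttrole]]] := role_covers lt_pos jf.
have slot_div : (i * F + tt) %/ F = i by rewrite divnMDl // divn_small // addn0.
have slot_mod : (i * F + tt) %% F = tt by rewrite modnMDl modn_small.
have slotE : slot_config sch (i * F + tt) = frame_config tt by rewrite /slot_config slot_mod.
exists (i * F + tt), X; split; rewrite ?slotE //.
  by rewrite (leq_trans (_ : _ < i.+1 * F)) ?leq_mul2r ?ltin ?orbT // mulSn; lia.
rewrite /frame_policy slotE ttX slot_div slot_mod ttrole subnKC //.
by rewrite (leq_trans ltk' (geq_minr _ _)).
Qed.

Lemma frame_policy_valid : valid_run src fan sch frame_policy A.
Proof.
move=> t i f X k tX tk; have src_f : src f = i.
  by have [+ _] := sch_valid t => /(_ i); rewrite tX; case.
subst i.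
have [eq_k lek ltk] := sent_in_batch tX tk; split.
  move: tk; rewrite /frame_policy tX; case: ifP => // ltkA [<-].
  by rewrite (leq_trans ltkA) // A_mono // leq_divM.
have [j jf unseen] := role_fresh (ltn_pmod t sch_nonempty) tX.
case/(_ j jf) => s [X' [ltst [sX' [jX' sk]]]].
have [eq_k' lek' ltk'] := sent_in_batch sX' sk.
have same_frame : s %/ F = t %/ F.
  apply/eqP; rewrite eqn_leq leq_div2r ?(ltnW ltst) //= leqNgt; apply/negP => lt_frames.
  by have := leq_trans ltk' (batch_start_mono f lt_frames); rewrite ltnNge lek.
have same_role : role f (s %% F) = role f (t %% F).
  by apply/eqP; rewrite -(eqn_add2l (batch_start A f (t %/ F))) -eq_k -same_frame -eq_k'.
have lt_slots : s %% F < t %% F.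
  by move: ltst; rewrite {1}(divn_eq s F) {1}(divn_eq t F) same_frame ltn_add2l.
by have := unseen _ _ lt_slots sX' same_role; rewrite jX'.
Qed.

Lemma frame_policy_guarantee : frame_guarantee src fan sch frame_policy A c.
Proof.
case=> // nn _ f k [[ltkA unserved] oldest] /=.
have lek : batch_start A f nn <= k.
  by rewrite leqNgt; apply/negP => /served_below_batch.
apply: served_below_batch; rewrite /= leq_min ltkA andbT.
have := oldest (iota (batch_start A f nn) (k - batch_start A f nn)) (iota_uniq _ _).
rewrite size_iota; suff /[swap]/[apply]: forall k', k' \in iota (batch_start A f nn)
    (k - batch_start A f nn) -> k' < k /\ in_queue src fan sch frame_policy A f k' (nn * F) by lia.
move=> k'; rewrite mem_iota => /andP[lek' ltk']; have ltk'k : k' < k by lia.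
split=> //; split; first exact: ltn_trans ltkA.
by have [j jf] := fan_nonempty f; move/(_ j jf)/delivered_below_batch; rewrite ltnNge lek'.
Qed.

End Run.

Lemma frame_schedule_policy : exists pol : policy m Fl, causal pol /\
  forall A : arrivals Fl, arrivals_monotone A ->
    valid_run src fan sch pol A /\ frame_guarantee src fan sch pol A c.
Proof.
exists frame_policy; split=> [|A A_step]; first exact: frame_policy_causal.
by split; [exact: frame_policy_valid | exact: frame_policy_guarantee].
Qed.

End FrameSchedule.

Section TwoByNSchedule.
Variables (n F c0 : nat) (cu : 'I_n.+1 -> nat).

Definition block_start (k : nat) : nat := \sum_(j < k) cu (inord j).
Definition unicast_slots : nat := block_start n.+1.
Definition block_of (t : nat) : 'I_n.+1 := inord (\sum_(j < n.+1) (block_start j.+1 <= t : nat)).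

Lemma block_start_step k : block_start k <= block_start k.+1.
Proof. by rewrite /block_start big_ord_recr leq_addr. Qed.

Lemma block_startS (i : 'I_n.+1) : block_start i.+1 = block_start i + cu i.
Proof. by rewrite /block_start big_ord_recr inord_val. Qed.

Lemma unicast_slotsE : unicast_slots = \sum_i cu i.
Proof. by apply: eq_bigr => i _; rewrite inord_val. Qed.

Lemma block_ofE (i : 'I_n.+1) t :
  block_start i <= t < block_start i.+1 -> block_of t = i.
Proof.
move=> ti.
by rewrite /block_of (count_passed_steps block_start_step (ltn_ord i) ti) inord_val.
Qed.

Lemma block_ofP t : t < unicast_slots ->
  block_start (block_of t) <= t < block_start (block_of t) + cu (block_of t).
Proof.
move=> ltt; have le0t : block_start 0 <= t by rewrite /block_start big_ord0.
have [i ltin ti] := nondecreasing_interval block_start_step le0t ltt.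
by rewrite (block_ofE (i := Ordinal ltin) ti) -block_startS.
Qed.

Lemma block_start_le (i : 'I_n.+1) : block_start i + cu i <= unicast_slots.
Proof.
by rewrite -block_startS (homo_leq leqnn leq_trans block_start_step (ltn_ord i)).
Qed.

Definition n_full : nat := minn c0 (F - unicast_slots).
Definition n_split : nat := c0 - n_full.

Hypothesis unicast_load : \sum_i cu i <= F.
Hypothesis pair_load : forall i, c0 + cu i <= F.
Hypothesis total_load : 2 * c0 + \sum_i cu i <= 2 * F.

Lemma n_split_le : 2 * n_split <= unicast_slots.
Proof. rewrite /n_split /n_full unicast_slotsE; lia. Qed.

Lemma n_full_le : unicast_slots + n_full <= F.
Proof. rewrite /n_full unicast_slotsE; lia. Qed.

Lemma c0_split : c0 = n_full + n_split.
Proof. rewrite /n_split /n_full; lia. Qed.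

Lemma cu_le_split_gap i : cu i <= unicast_slots - n_split.
Proof.
have := pair_load i; have := leq_sum_term cu i.
by rewrite /n_split /n_full unicast_slotsE; lia.
Qed.

Lemma block_of_split_neq p : p < n_split ->
  block_of p != block_of (p + (unicast_slots - n_split)).
Proof.
move=> ltp; have split_le := n_split_le; have p_lt : p < unicast_slots by lia.
have p'_lt : p + (unicast_slots - n_split) < unicast_slots by lia.
apply/eqP => eq_block; have /andP[+ _] := block_ofP p_lt.
have /andP[_] := block_ofP p'_lt; rewrite -eq_block.
by have := cu_le_split_gap (block_of p); lia.
Qed.

Local Notation U := unicast_slots.
Local Notation b := n_split.

Definition broadcast_choice (tt : nat) : option (option 'I_n.+1 * {set 'I_n.+1}) :=
  if tt < b then Some (None, setT :\ block_of tt)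
  else if U - b <= tt < U then Some (None, [set block_of (tt - (U - b))])
  else if U <= tt < U + n_full then Some (None, setT) else None.

Definition unicast_choice (tt : nat) : option (option 'I_n.+1 * {set 'I_n.+1}) :=
  if tt < U then Some (Some (block_of tt), [set block_of tt]) else None.

Definition config2N (tt : nat) : config 2 n.+1 (option 'I_n.+1) :=
  [ffun i => if i == ord0 then broadcast_choice tt else unicast_choice tt].

Definition schedule2N : seq (config 2 n.+1 (option 'I_n.+1)) := mkseq config2N F.

Definition role2N (f : option 'I_n.+1) (tt : nat) : nat :=
  if f is Some i then tt - block_start i
  else if tt < b then tt else if tt < U then tt - (U - b) else b + (tt - U).

Definition count2N (f : option 'I_n.+1) : nat := if f is Some i then cu i else c0.

Lemma ord2_cases (i : 'I_2) : i = ord0 \/ i = ord_max.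
Proof. by case: i => [[|[|//]] lti]; [left | right]; apply: val_inj. Qed.

Lemma config2N_None tt : config2N tt (@src2N n.+1 None) = broadcast_choice tt.
Proof. by rewrite ffunE. Qed.

Lemma config2N_Some tt (i : 'I_n.+1) : config2N tt (src2N (Some i)) = unicast_choice tt.
Proof. by rewrite ffunE. Qed.

Lemma unicast_choiceP tt i X : unicast_choice tt = Some (Some i, X) ->
  [/\ X = [set i], block_start i <= tt & tt < block_start i + cu i].
Proof.
rewrite /unicast_choice; case: ifP => // ltt [<- <-].
by have /andP[-> ->] := block_ofP ltt.
Qed.

Lemma broadcast_choiceP tt X : broadcast_choice tt = Some (None, X) ->
  [\/ [/\ tt < b, X = setT :\ block_of tt & role2N None tt = tt],
      [/\ U - b <= tt < U, X = [set block_of (tt - (U - b))] & role2N None tt = tt - (U - b)]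
    | [/\ U <= tt, tt < U + n_full & role2N None tt = b + (tt - U)]].
Proof.
rewrite /broadcast_choice /role2N.
case: ifP => [ltb [<-]|leb]; first by constructor 1.
case: ifP => [/andP[le_tt lt_tt] [<-]|_]; first by constructor 2; rewrite lt_tt.
case: ifP => // /andP[le_tt lt_tt] _; constructor 3; rewrite lt_tt ifF //.
by apply: negbTE; rewrite -leqNgt.
Qed.

Lemma config2N_valid tt : valid_config (@src2N n.+1) (@fan2N n.+1) (config2N tt).
Proof.
split=> [i|i1 i2 f1 X1 f2 X2].
  rewrite ffunE; case: (ord2_cases i) => ->; rewrite ?eqxx /=; last first.
    by rewrite /unicast_choice; case: ifP.
  by rewrite /broadcast_choice; do 3 (case: ifP => _; first by rewrite subsetT).
have disjoint_inputs X1' X2' f1' f2' : broadcast_choice tt = Some (f1', X1') ->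
    unicast_choice tt = Some (f2', X2') -> [disjoint X1' & X2'].
  rewrite /unicast_choice; case: ifP => // ltU bX1 [_ <-].
  rewrite disjoint_sym disjoints1; move: bX1; rewrite /broadcast_choice.
  case: ifP => [_ [_ <-]|ltb]; first by rewrite setD11.
  case: ifP => [/andP[le_tt _] [_ <-]|_]; last by case: ifP => //; lia.
  rewrite in_set1 eq_sym; have := @block_of_split_neq (tt - (U - b)).
  by rewrite subnK //; apply; lia.
case: (ord2_cases i1) => ->; case: (ord2_cases i2) => -> //; rewrite !ffunE /=.
  by move=> _; exact: disjoint_inputs.
by move=> _ uX2 bX1; rewrite disjoint_sym; exact: disjoint_inputs bX1 uX2.
Qed.

Lemma schedule2N_nth tt i : tt < F ->
  nth (idle_config 2 n.+1 _) schedule2N tt i = config2N tt i.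
Proof. by move=> ltt; rewrite nth_mkseq. Qed.

Hypothesis frame_pos : 0 < F.

Lemma schedule2N_valid t :
  valid_config (@src2N n.+1) (@fan2N n.+1) (slot_config schedule2N t).
Proof.
by rewrite /slot_config size_mkseq nth_mkseq ?ltn_pmod //; exact: config2N_valid.
Qed.

Lemma role2N_lt f tt X : tt < size schedule2N ->
  nth (idle_config 2 n.+1 _) schedule2N tt (src2N f) = Some (f, X) -> role2N f tt < count2N f.
Proof.
rewrite size_mkseq => ltt; rewrite schedule2N_nth //; case: f => [i|].
  by rewrite config2N_Some => /unicast_choiceP [_ le lt] /=; lia.
rewrite config2N_None /count2N c0_split => /broadcast_choiceP.
by case=> [[ltb _ ->]|[/andP[le_tt lt_tt] _ ->]|[le_tt lt_tt ->]]; lia.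
Qed.

Lemma role2N_covers f p j : p < count2N f -> j \in fan2N f -> exists tt X,
  [/\ tt < size schedule2N, nth (idle_config 2 n.+1 _) schedule2N tt (src2N f) = Some (f, X),
      j \in X & role2N f tt = p].
Proof.
rewrite size_mkseq; have split_le := n_split_le; have full_le := n_full_le.
case: f => [i|] /= ltp; rewrite ?c0_split in ltp.
  rewrite in_set1 => /eqP ->; have block_le := block_start_le i.
  exists (block_start i + p), [set i]; rewrite schedule2N_nth ?(config2N_Some _ i); last lia.
  have ltU : block_start i + p < U by lia.
  rewrite /unicast_choice ltU (@block_ofE i) ?block_startS; last lia.
  by split; rewrite ?in_set1 ?addKn //; lia.
move=> _; case: (ltnP p b) => ltb; last first.
  exists (U + (p - b)), setT.
  rewrite schedule2N_nth ?config2N_None /broadcast_choice /=; last lia.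
  have [-> -> ->] : [/\ (U + (p - b) < b) = false, (U + (p - b) < U) = false
    & (U <= U + (p - b) < U + n_full)] by split; lia.
  by rewrite andbF in_setT; split=> //; lia.
have [->|neq_j] := eqVneq j (block_of p).
  exists (p + (U - b)), [set block_of p].
  rewrite schedule2N_nth ?config2N_None /broadcast_choice /=; last lia.
  have [-> -> ->] : [/\ (p + (U - b) < b) = false, U - b <= p + (U - b)
    & p + (U - b) < U] by split; lia.
  by rewrite addnK in_set1; split=> //; lia.
exists p, (setT :\ block_of p); rewrite schedule2N_nth ?config2N_None; last lia.
by rewrite /broadcast_choice /= ltb in_setD1 neq_j in_setT; split=> //; lia.
Qed.

Lemma role2N_fresh f tt X : tt < size schedule2N ->
  nth (idle_config 2 n.+1 _) schedule2N tt (src2N f) = Some (f, X) ->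
  exists2 j, j \in fan2N f & forall tt' X', tt' < tt ->
    nth (idle_config 2 n.+1 _) schedule2N tt' (src2N f) = Some (f, X') ->
    role2N f tt' = role2N f tt -> j \notin X'.
Proof.
rewrite size_mkseq => ltt; rewrite schedule2N_nth //; have split_le := n_split_le.
case: f => [i|].
  rewrite config2N_Some => /unicast_choiceP [_ le lt]; exists i; first by rewrite in_set1.
  move=> tt' X' lt'; rewrite schedule2N_nth ?config2N_Some; last lia.
  by case/unicast_choiceP => _ le' lt'' /=; lia.
rewrite config2N_None => /broadcast_choiceP tt_cases.
exists (block_of (tt - (U - b))); first by rewrite in_setT.
move=> tt' X' lt'; rewrite schedule2N_nth ?config2N_None; last lia.
case/broadcast_choiceP => [[ltb' -> ->]|[/andP[le_tt' lt_tt'] _ ->]|[le_tt' _ ->]];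
  case: tt_cases => [[ltb _ ->]|[/andP[le_tt lt_tt] _ ->]|[le_tt _ ->]] eq_role; try lia.
by rewrite in_setD1 -eq_role eqxx.
Qed.

Lemma schedule2N_policy : exists pol : policy 2 (option 'I_n.+1), causal pol /\
  forall A : arrivals _, arrivals_monotone A ->
    valid_run (@src2N n.+1) (@fan2N n.+1) schedule2N pol A /\
    frame_guarantee (@src2N n.+1) (@fan2N n.+1) schedule2N pol A count2N.
Proof.
apply: (frame_schedule_policy (role := role2N)).
- by rewrite size_mkseq.
- exact: schedule2N_valid.
- by case=> [i|]; [exists i; rewrite in_set1 | exists ord0; rewrite in_setT].
- exact: role2N_lt.
- exact: role2N_covers.
- exact: role2N_fresh.
Qed.

End TwoByNSchedule.

Lemma sum_bool_le1 (I : finType) (P : pred I) (C : I -> nat) (b : I -> nat -> bool) :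
  (forall i k i' k', P i -> P i' -> b i k -> b i' k' -> i = i' /\ k = k') ->
  \sum_(i | P i) \sum_(k < C i) b i k <= 1.
Proof.
move=> b_unique; have [/existsP[i0 /andP[Pi0 /existsP[k0 bk0]]]|none] :=
  boolP [exists i, P i && [exists k : 'I_(C i), b i k]]; last first.
  rewrite big1 // => i Pi; rewrite big1 // => k _; apply/eqP; rewrite eqb0.
  by apply: contra none => bik; apply/existsP; exists i; rewrite Pi; apply/existsP; exists k.
rewrite (bigD1 i0) //= (bigD1 k0) //= bk0 big1 => [|k neq_k]; last first.
  apply/eqP; rewrite eqb0; apply: contra neq_k => bk.
  by have [_ /val_inj ->] := b_unique _ _ _ _ Pi0 Pi0 bk bk0.
rewrite addn0 big1 // => i /andP[Pi neq_i]; rewrite big1 // => k _.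
apply/eqP; rewrite eqb0; apply: contra neq_i => bk.
by apply/eqP; have [] := b_unique _ _ _ _ Pi Pi0 bk bk0.
Qed.

Lemma leq_sum_two_terms (I : finType) (g : I -> nat) i1 i2 :
  i1 != i2 -> g i1 + g i2 <= \sum_i g i.
Proof. by move=> neq_i; rewrite (bigD1 i1) //= (bigD1 i2) 1?eq_sym //= addnA leq_addr. Qed.

Lemma sum_ones (I : finType) (P : pred I) (C : I -> nat) :
  \sum_(i | P i) \sum_(k < C i) 1 = \sum_(i | P i) C i.
Proof. by apply: eq_bigr => i _; rewrite sum_nat_const card_ord muln1. Qed.

Lemma double_count (I J : finType) (P : pred I) (C : I -> nat) (w : I -> nat -> nat)
    (hit : J -> I -> nat -> nat) (bound : nat) :
  (forall i (k : 'I_(C i)), P i -> w i k <= \sum_j hit j i k) ->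
  (forall j, \sum_(i | P i) \sum_(k < C i) hit j i k <= bound) ->
  \sum_(i | P i) \sum_(k < C i) w i k <= #|J| * bound.
Proof.
move=> w_le hit_le; rewrite -sum_nat_const.
apply: (@leq_trans (\sum_(i | P i) \sum_(k < C i) \sum_j hit j i k)).
  by apply: leq_sum => i Pi; apply: leq_sum => k _; exact: w_le.
rewrite (eq_bigr (fun i => \sum_j \sum_(k < C i) hit j i k)) => [|i _]; last exact: exchange_big.
by rewrite exchange_big; apply: leq_sum => j _; exact: hit_le.
Qed.

Lemma sum_option (T : finType) (g : option T -> nat) :
  \sum_(o : option T) g o = g None + \sum_(i : T) g (Some i).
Proof.
rewrite (bigD1 None) // (reindex_omap Some id) => [|[]] //.
by congr (_ + _); apply: eq_bigl => i; rewrite eqxx.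
Qed.

Section FrameCounting.
Variables (m n : nat) (Fl : finType) (src : Fl -> 'I_m) (fan : Fl -> {set 'I_n}).

Definition sends (cf : config m n Fl) (p : 'I_m -> option nat) (f : Fl) (k : nat) (j : 'I_n) :=
  if cf (src f) is Some (g, X) then [&& g == f, j \in X & p (src f) == Some k] else false.

Lemma sends_input_unique cf p f k j f' k' j' : src f = src f' ->
  sends cf p f k j -> sends cf p f' k' j' -> f = f' /\ k = k'.
Proof.
rewrite /sends => <-; case: (cf (src f)) => [[g X]|] //.
by case/and3P=> /eqP <- _ /eqP -> /and3P[/eqP -> _ /eqP [->]].
Qed.

Lemma sends_output_unique cf p f k f' k' j : valid_config src fan cf ->
  sends cf p f k j -> sends cf p f' k' j -> f = f' /\ k = k'.
Proof.
move=> [_ cf_disj] sfk sfk'; have [eq_src|neq_src] := eqVneq (src f) (src f').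
  exact: sends_input_unique sfk sfk'.
move: sfk sfk'; rewrite /sends.
case cf_f: (cf (src f)) => [[g X]|] //; case cf_f': (cf (src f')) => [[g' X']|] //.
case/and3P=> _ jX _ /and3P[_ jX' _].
have /disjoint_setI0/setP/(_ j) := cf_disj _ _ _ _ _ _ neq_src cf_f cf_f'.
by rewrite inE jX jX' in_set0.
Qed.

Variables (sch : seq (config m n Fl)) (c : Fl -> nat) (pol : policy m Fl).
Local Notation F := (size sch).
Hypothesis sch_valid : forall t, valid_config src fan (slot_config sch t).
Hypothesis pol_guarantee : forall A, arrivals_monotone A -> frame_guarantee src fan sch pol A c.

Let A0 : arrivals Fl := fun f _ => c f.
Let sent (s : 'I_F) := sends (slot_config sch s) (pol A0 s).

Lemma served_first_frame f k : k < c f -> served src fan sch pol A0 f k F.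
Proof.
move=> ltk; case: (pickP (mem (fan f))) => [j0 j0f|fan0]; last by move=> j; rewrite [j \in _]fan0.
have := @pol_guarantee A0 (fun _ _ => leqnn _) 1 isT f k; rewrite mul0n mul1n; apply.
split=> [|s s_uniq s_older]; first by split=> // /(_ j0 j0f) [s [X []]].
rewrite (leq_ltn_trans _ ltk) // -(size_iota 0 k) uniq_leq_size // => x.
by case/s_older => + _; rewrite mem_iota.
Qed.

Lemma packet_sent f k j : k < c f -> j \in fan f -> exists s : 'I_F, sent s f k j.
Proof.
move=> ltk /(served_first_frame ltk) [s [X [ltsF [sX [jX sk]]]]].
by exists (Ordinal ltsF); rewrite /sent /sends /= sX eqxx jX sk eqxx.
Qed.

Lemma input_load i : (forall f, exists j, j \in fan f) -> \sum_(f | src f == i) c f <= F.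
Proof.
move=> fan_nonempty; rewrite -sum_ones -[F]muln1 -[F in F * 1]card_ord.
apply: (double_count (w := fun _ _ => 1) (hit := fun s f k => [exists j, sent s f k j]))
  => [f k _|s].
  have [j jf] := fan_nonempty f; have [s sfk] := packet_sent (ltn_ord k) jf.
  by rewrite (bigD1 s) //= (_ : [exists j, _]) //; apply/existsP; exists j.
apply: (@sum_bool_le1 _ _ _ (fun f k => [exists j, sent s f k j])).
move=> f k f' k' /eqP eq_f /eqP eq_f' /existsP[j sfk] /existsP[j' sfk'].
by apply: sends_input_unique sfk sfk'; rewrite eq_f eq_f'.
Qed.

Lemma output_load j : \sum_(f | j \in fan f) c f <= F.
Proof.
rewrite -sum_ones -[F]muln1 -[F in F * 1]card_ord.
apply: (double_count (w := fun _ _ => 1) (hit := fun s f k => sent s f k j)) => [f k jf|s].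
  by have [s sfk] := packet_sent (ltn_ord k) jf; rewrite (bigD1 s) //= sfk.
apply: (@sum_bool_le1 _ _ _ (fun f k => sent s f k j)) => f k f' k' _ _.
exact: sends_output_unique.
Qed.

End FrameCounting.

Section TwoByNCounting.
Variables (N : nat) (sch : seq (config 2 N (option 'I_N))) (c : option 'I_N -> nat).
Variable pol : policy 2 (option 'I_N).
Local Notation F := (size sch).
Hypothesis N_pos : 0 < N.
Hypothesis sch_valid : forall t, valid_config (@src2N N) (@fan2N N) (slot_config sch t).
Hypothesis pol_guarantee :
  forall A, arrivals_monotone A -> frame_guarantee (@src2N N) (@fan2N N) sch pol A c.

Let j0 : 'I_N := Ordinal N_pos.
Let sent (s : 'I_F) := sends (@src2N N) (slot_config sch s) (pol (fun f _ => c f) s).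

Lemma fan2N_nonempty (f : option 'I_N) : exists j, j \in fan2N f.
Proof. by case: f => [i|]; [exists i; rewrite in_set1 | exists j0; rewrite in_setT]. Qed.

Lemma fan2N_common (f f' : option 'I_N) :
  src2N f = src2N f' \/ exists2 j, j \in fan2N f & j \in fan2N f'.
Proof.
by case: f f' => [i|] [i'|]; [left | right; exists i | right; exists i' | left];
  rewrite ?in_set1 ?in_setT.
Qed.

Lemma unicast_load2N : \sum_i c (Some i) <= F.
Proof.
have := input_load pol_guarantee ord_max fan2N_nonempty.
by rewrite big_mkcond sum_option.
Qed.

Lemma output_load2N i : c None + c (Some i) <= F.
Proof.
have := output_load sch_valid pol_guarantee i.
rewrite big_mkcond sum_option /= in_setT -big_mkcond (big_pred1 i) // => i'.
by rewrite /= in_set1 eq_sym.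
Qed.

Let first_input s f k := (src2N f == ord0) && [exists j, sent s f k j].
Let full_send s f k := [forall j in fan2N f, sent s f k j].
Let credit s f k : nat := first_input s f k + full_send s f k.

Lemma unicast_credit i (k : 'I_(c (Some i))) : 1 <= \sum_s credit s (Some i) k.
Proof.
have ii : i \in fan2N (Some i) by rewrite in_set1.
have [s sik] := packet_sent pol_guarantee (ltn_ord k) ii.
have full_s : full_send s (Some i) k by apply/forall_inP => j; rewrite in_set1 => /eqP ->.
by apply: leq_trans (leq_sum_term _ s); rewrite /credit full_s addn1.
Qed.

Lemma broadcast_credit (k : 'I_(c None)) : 2 <= \sum_s credit s None k.
Proof.
have sent_first s j : sent s None k j -> first_input s None k.
  by move=> sk; apply/existsP; exists j.
have [s full_s|no_full] := pickP (fun s => full_send s None k).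
  apply: leq_trans (leq_sum_term _ s); rewrite /credit /= full_s (sent_first s j0) //.
  exact: (forall_inP full_s).
have j0_fan : j0 \in fan2N None by rewrite in_setT.
have [s1 s1k] := packet_sent pol_guarantee (ltn_ord k) j0_fan.
have /forall_inPn[j1 j1_fan not_s1k] := negbT (no_full s1).
have [s2 s2k] := packet_sent pol_guarantee (ltn_ord k) j1_fan.
have neq_s : s1 != s2 by apply: contraNneq not_s1k => ->.
apply: leq_trans (leq_sum_two_terms _ neq_s).
by rewrite /credit (sent_first _ _ s1k) (sent_first _ _ s2k) /=; lia.
Qed.

Lemma slot_credit s : \sum_f \sum_(k < c f) credit s f k <= 2.
Proof.
rewrite (eq_bigr (fun f => \sum_(k < c f) first_input s f k + \sum_(k < c f) full_send s f k));
  last by move=> f _; rewrite big_split.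
rewrite big_split /= -[2]/(1 + 1); apply: leq_add.
  apply: (@sum_bool_le1 _ _ _ (first_input s)) => f k f' k' _ _.
  case/andP=> /eqP src_f /existsP[j sfk] /andP[/eqP src_f' /existsP[j' sfk']].
  by apply: sends_input_unique sfk sfk'; rewrite src_f src_f'.
apply: (@sum_bool_le1 _ _ _ (full_send s)) => f k f' k' _ _ /forall_inP full /forall_inP full'.
have [eq_src|[j jf jf']] := fan2N_common f f'; last first.
  exact: sends_output_unique (sch_valid s) (full j jf) (full' j jf').
have [j jf] := fan2N_nonempty f; have [j' jf'] := fan2N_nonempty f'.
exact: sends_input_unique eq_src (full j jf) (full' j' jf').
Qed.

Lemma total_load2N : 2 * c None + \sum_i c (Some i) <= 2 * F.
Proof.
pose w (f : option 'I_N) (_ : nat) := if f is None then 2 else 1.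
suff: \sum_f \sum_(k < c f) w f k <= #|'I_F| * 2.
  by rewrite card_ord sum_option sum_nat_const card_ord sum_ones mulnC [2 * F]mulnC.
apply: (double_count (P := predT) (w := w) (hit := credit)) => [[i|] k _|s].
- exact: unicast_credit.
- exact: broadcast_credit.
- exact: slot_credit.
Qed.

End TwoByNCounting.

Local Open Scope ring_scope.

Lemma common_denominator (T : finType) (q : T -> rat) : (forall t, 0 <= q t) ->
  exists2 D : nat, (0 < D)%N & exists c : T -> nat, forall t, q t * D%:R = (c t)%:R.
Proof.
move=> q_ge0; pose D := (\prod_t `|denq (q t)|)%N.
exists D; first by rewrite prodn_gt0 // => t; rewrite absz_gt0 denq_neq0.
exists (fun t => `|numq (q t)| * (D %/ `|denq (q t)|))%N => t.
have den_dvd : (`|denq (q t)| %| D)%N by rewrite /D (bigD1 t) //= dvdn_mulr.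
have numE : (`|numq (q t)|%N)%:R = (numq (q t))%:~R :> rat.
  by rewrite -[LHS]/((`|numq (q t)|%N)%:Z%:~R) gez0_abs // numq_ge0.
have denE : (`|denq (q t)|%N)%:R = (denq (q t))%:~R :> rat.
  by rewrite -[LHS]/((`|denq (q t)|%N)%:Z%:~R) gez0_abs // ltW // denq_gt0.
have den_neq0 : (denq (q t))%:~R != 0 :> rat by rewrite intr_eq0 denq_neq0.
rewrite -{1}(divnK den_dvd) !natrM numE denE -{1}(divq_num_den (q t)).
by field.
Qed.

Lemma scaled_le (x : rat) (F a b : nat) : (0 < F)%N -> x * F%:R = a%:R ->
  (x <= b%:R) = (a <= b * F)%N.
Proof. by move=> F_pos xF; rewrite -(ler_pM2r (_ : 0 < F%:R)) ?ltr0n // xF -natrM ler_nat. Qed.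

Lemma scaled_ge0 (x : rat) (F a : nat) : (0 < F)%N -> x * F%:R = a%:R -> 0 <= x.
Proof. by move=> F_pos xF; rewrite -(pmulr_lge0 _ (_ : 0 < F%:R)) ?ltr0n // xF ler0n. Qed.

Lemma rates2N_scaled N r0 (r : 'I_N -> rat) (F : nat) (c : option 'I_N -> nat) :
  (0 < F)%N -> (forall f, rates2N r0 r f * F%:R = (c f)%:R) ->
  [/\ 0 <= r0, (forall i, 0 <= r i), \sum_(i < N) r i <= 1,
      (forall i, r0 + r i <= 1) & 2 * r0 + \sum_(i < N) r i <= 2] <->
  [/\ (\sum_i c (Some i) <= F)%N, (forall i, c None + c (Some i) <= F)%N
    & (2 * c None + \sum_i c (Some i) <= 2 * F)%N].
Proof.
move=> F_pos rate_c; have rate0 := rate_c None.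
have sumE : (\sum_i r i) * F%:R = (\sum_i c (Some i))%:R.
  by rewrite mulr_suml natr_sum; apply: eq_bigr => i _; exact: (rate_c (Some i)).
have pairE i : (r0 + r i) * F%:R = (c None + c (Some i))%:R.
  by rewrite mulrDl natrD rate0 (rate_c (Some i)).
have totalE : (2 * r0 + \sum_i r i) * F%:R = (2 * c None + \sum_i c (Some i))%:R.
  by rewrite mulrDl -mulrA rate0 sumE natrD natrM.
rewrite -[1 : rat]/(1%:R) (scaled_le _ F_pos sumE) (scaled_le _ F_pos totalE) mul1n.
have pair_scaled i : (r0 + r i <= 1) = (c None + c (Some i) <= F)%N.
  by rewrite -[1 : rat]/(1%:R) (scaled_le _ F_pos (pairE i)) mul1n.
split=> [[_ _ -> pair_le ->]|[-> pair_le ->]].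
  by split=> // i; rewrite -pair_scaled.
split=> // [|i|i]; last by rewrite pair_scaled.
  exact: scaled_ge0 F_pos rate0.
exact: scaled_ge0 F_pos (rate_c (Some i)).
Qed.

Theorem theorem8 (N : nat) (r0 : rat) (r : 'I_N -> rat) :
  (0 < N)%N ->
  (achievable (@src2N N) (@fan2N N) (rates2N r0 r) <->
   [/\ 0 <= r0, (forall i, 0 <= r i), \sum_(i < N) r i <= 1,
       (forall i, r0 + r i <= 1) & 2 * r0 + \sum_(i < N) r i <= 2]).
Proof.
move=> N_pos; split.
  case=> sch [c [F_pos sch_valid rate_c [pol [_ pol_run]]]].
  have pol_guarantee A (A_step : arrivals_monotone A) := (pol_run A A_step).2.
  apply/(rates2N_scaled F_pos rate_c); split.
  - exact: unicast_load2N N_pos pol_guarantee.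
  - exact: output_load2N sch_valid pol_guarantee.
  - exact: total_load2N N_pos sch_valid pol_guarantee.
case: N N_pos r => // n _ r rates_ok.
have [D D_pos [c rate_c]] : exists2 D : nat, (0 < D)%N &
    exists c, forall f, rates2N r0 r f * D%:R = (c f)%:R.
  by apply: common_denominator; case: rates_ok => r0_ge0 r_ge0 _ _ _ [].
have [unicast_ok pair_ok total_ok] := (rates2N_scaled D_pos rate_c).1 rates_ok.
exists (schedule2N D (c None) (fun i => c (Some i))), (count2N (c None) (fun i => c (Some i))).
split; rewrite ?size_mkseq //.
- exact: schedule2N_valid.
- by case=> [i|]; apply: rate_c.
- exact: schedule2N_policy.
Qed.
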